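(* The function $$\mathcal{L}(\boldsymbol{U},\boldsymbol{V})=\frac1n\sum_{i=1}^n\big(\langle\boldsymbol{P}_i,\boldsymbol{U}\boldsymbol{U}^\top-\boldsymbol{V}\boldsymbol{V}^\top\rangle-y_i^*\big)^2+\frac\lambda2\,\mathrm{tr}(\boldsymbol{U}\boldsymbol{U}^\top+\boldsymbol{V}\boldsymbol{V}^\top),\qquad \boldsymbol{U},\boldsymbol{V}\in\mathbb{R}^{d\times d},$$ satisfies: (1) all local minima of $\mathcal{L}$ are global minima; (2) at any saddle point $(\boldsymbol{U}_s,\boldsymbol{V}_s)$ of $\mathcal{L}$ there is a direction $(\boldsymbol{\mathcal{E}}_{\boldsymbol{U}},\boldsymbol{\mathcal{E}}_{\boldsymbol{V}})$ with $\mathrm{vec}(\boldsymbol{\mathcal{E}}_{\boldsymbol{U}},\boldsymbol{\mathcal{E}}_{\boldsymbol{V}})^\top\nabla^2\mathcal{L}(\boldsymbol{U}_s,\boldsymbol{V}_s)\,\mathrm{vec}(\boldsymbol{\mathcal{E}}_{\boldsymbol{U}},\boldsymbol{\mathcal{E}}_{\boldsymbol{V}})<0$.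
   Context: $\lambda>0$. Observed index pairs $(i_k,j_k)\in[d]\times[d]$, $k\in[n]$, with $\boldsymbol{P}_k:=\frac12(\boldsymbol{e}_{i_k}\boldsymbol{e}_{j_k}^\top+\boldsymbol{e}_{j_k}\boldsymbol{e}_{i_k}^\top)$, and targets $y_k^*\in\mathbb{R}$ (the observed entries of a symmetric matrix). A saddle point is a stationary point that is not a local extremum. *)

From HB Require Import structures.
From mathcomp Require Import all_boot all_order all_algebra.
From mathcomp Require Import all_classical all_reals all_analysis.
Set Implicit Arguments. Unset Strict Implicit. Unset Printing Implicit Defensive.
Import Order.TTheory GRing.Theory Num.Theory.
Import numFieldNormedType.Exports.
Local Open Scope ring_scope.
Local Open Scope classical_set_scope.

Definition local_min {R : realType} {V : normedModType R} (f : V -> R) (x : V) :=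
  \forall y \near x, f x <= f y.
Definition local_max {R : realType} {V : normedModType R} (f : V -> R) (x : V) :=
  \forall y \near x, f y <= f x.
Definition global_min {R : realType} {V : normedModType R} (f : V -> R) (x : V) :=
  forall y, f x <= f y.
Definition stationary {R : realType} {V : normedModType R} (f : V -> R) (x : V) :=
  differentiable f x /\ 'd f x = (0 : V -> R).
Definition saddle {R : realType} {V : normedModType R} (f : V -> R) (x : V) :=
  stationary f x /\ ~ local_min f x /\ ~ local_max f x.
(* Hessian quadratic form  e^T (Hess f)(x) e  = second directional derivative *)
Definition hess_form {R : realType} {V : normedModType R} (f : V -> R) (x e : V) : R :=
  'D_e ('D_e f) x.

Definition Pmat {R : realType} {d : nat} (ij : 'I_d * 'I_d) : 'M[R]_d :=
  2^-1 *: (delta_mx ij.1 ij.2 + delta_mx ij.2 ij.1).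
Definition frob {R : realType} {d : nat} (A B : 'M[R]_d) : R := \tr (A^T *m B).

Definition lossL {R : realType} (d n : nat) (idx : 'I_n -> 'I_d * 'I_d)
  (y : 'I_n -> R) (lambda : R) (UV : 'M[R]_d * 'M[R]_d) : R :=
  let U := UV.1 in let V := UV.2 in
  n%:R^-1 * (\sum_(k < n) (frob (Pmat (idx k)) (U *m U^T - V *m V^T) - y k) ^+ 2)
  + lambda / 2 * \tr (U *m U^T + V *m V^T).

From HB Require Import structures.
From mathcomp Require Import all_boot all_order all_algebra.
From mathcomp Require Import all_classical all_reals all_analysis.
From mathcomp Require Import ring lra.
Import Order.TTheory GRing.Theory Num.Theory.
Import numFieldNormedType.Exports.
Local Open Scope ring_scope.
Local Open Scope classical_set_scope.
Set Implicit Arguments. Unset Strict Implicit.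

(* Along every line t |-> (U, V) + t (A, B) the loss is a quartic polynomial in t.
   Hence at a local minimum, and also at a stationary point without a direction
   of negative curvature, its linear coefficient vanishes and its quadratic one
   is nonnegative, for every direction.  Let G be the gradient of the data-fit
   term at X = U U^T - V V^T and S+- = lambda/2 I +- G.  The first-order
   conditions read S+ U = 0 and S- V = 0; testing the second-order condition on
   directions (A, 0) with A U^T = 0 and (0, B) with B V^T = 0 shows that S+ and
   S- are positive semidefinite.  As the fit is convex in X,
     L(U', V') >= fit X - <G, X> + <U', S+ U'> + <V', S- V'>
              >= fit X - <G, X> = L(U, V),
   so (U, V) is a global minimum. *)

Lemma horner_take_drop (R : comNzRingType) (p : {poly R}) k t :
  p.[t] = \sum_(i < k) p`_i * t ^+ i + (drop_poly k p).[t] * t ^+ k.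
Proof.
rewrite -{1}(poly_take_drop k p) hornerD hornerM hornerXn.
rewrite (horner_coef_wide _ (size_take_poly _ _)); congr (_ + _).
by apply: eq_bigr => i _; rewrite coef_take_poly ltn_ord.
Qed.

Lemma horner_ge0_lim (R : realType) (F : set_system R) {FF : ProperFilter F}
  (p : {poly R}) : F --> (0 : R) -> (\forall t \near F, 0 <= p.[t]) -> 0 <= p.[0].
Proof.
move=> F0 p_ge0; have p_cvg : p.[t] @[t --> F] --> p.[0].
  apply: continuous_cvg => //; exact: continuous_horner.
by rewrite -(cvg_lim _ p_cvg) //; apply: limr_ge => //; exact: cvgP p_cvg.
Qed.

Lemma poly_local_min (R : realType) (p : {poly R}) :
  (\forall t \near 0, p.[0] <= p.[t]) -> p`_1 = 0 /\ 0 <= p`_2.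
Proof.
move=> p_min; have p0 : p.[0] = p`_0 by rewrite horner_coef0.
have near_right : \forall t \near (0 : R)^'+, 0 < t /\ p.[0] <= p.[t].
  by near=> t; split; [near: t; exact: nbhs_right_gt | near: t; exact: cvg_within p_min].
have near_left : \forall t \near (0 : R)^'-, t < 0 /\ p.[0] <= p.[t].
  by near=> t; split; [near: t; exact: nbhs_left_lt | near: t; exact: cvg_within p_min].
set q := drop_poly 1 p; have q0 : q.[0] = p`_1 by rewrite horner_coef0 coef_drop_poly.
have pq t : p.[t] - p.[0] = q.[t] * t.
  by rewrite {1}(horner_take_drop p 1 t) big_ord1 p0 expr1 expr0 mulr1; ring.
have p1 : p`_1 = 0.
  apply/eqP; rewrite eq_le -q0; apply/andP; split.
    rewrite -oppr_ge0 -hornerN; apply: (horner_ge0_lim (F := (0 : R)^'-)).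
      exact: cvg_at_left_filter.
    apply: filterS near_left => t [t0 pt]; rewrite hornerN oppr_ge0.
    by rewrite -(nmulr_lge0 _ t0) -pq subr_ge0.
  apply: (horner_ge0_lim (F := (0 : R)^'+)); first exact: cvg_at_right_filter.
  apply: filterS near_right => t [t0 pt].
  by rewrite -(pmulr_lge0 _ t0) -pq subr_ge0.
split => //; set r := drop_poly 2 p.
have pr t : p.[t] - p.[0] = r.[t] * t ^+ 2.
  by rewrite {1}(horner_take_drop p 2 t) !big_ord_recr big_ord0 /= p0 p1; ring.
have -> : p`_2 = r.[0] by rewrite horner_coef0 coef_drop_poly.
apply: (horner_ge0_lim (F := (0 : R)^'+)); first exact: cvg_at_right_filter.
apply: filterS near_right => t [t0 pt].
by rewrite -(pmulr_lge0 _ (exprn_gt0 2 t0)) -pr subr_ge0.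
Unshelve. all: by end_near.
Qed.

Lemma derive_line_poly (R : realType) (V : normedModType R) (f : V -> R) (x e : V)
  (p : {poly R}) :
  (forall t, f (x + t *: e) = p.[t]) -> forall t, 'D_e f (x + t *: e) = p^`().[t].
Proof.
move=> f_line t; transitivity ('D_1 (horner p) t); last exact: derive_val.
rewrite /derive; do 2 f_equal; apply/funext => h /=.
by rewrite addrA -[_ + t *: e]addrC addrA -scalerDl addrC !f_line scaler1 [h + t]addrC.
Qed.

Section PolynomialLine.
Variables (R : realType) (V : normedModType R) (f : V -> R) (x e : V) (p : {poly R}).
Hypothesis f_line : forall t, f (x + t *: e) = p.[t].

Lemma hess_form_line_poly : hess_form f x e = 2 * p`_2.
Proof.
have := derive_line_poly (f := 'D_e f) (derive_line_poly f_line) 0.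
rewrite scale0r addr0 /hess_form => ->.
by rewrite horner_coef0 !coef_deriv mulr_natl.
Qed.

Lemma stationary_line_poly : stationary f x -> p`_1 = 0.
Proof.
move=> [f_diff df0]; have := derive_line_poly f_line 0.
by rewrite scale0r addr0 deriveE // df0 horner_coef0 coef_deriv mulr1n => <-.
Qed.

Lemma local_min_line_poly : local_min f x -> p`_1 = 0 /\ 0 <= p`_2.
Proof.
move=> f_min; apply: poly_local_min; rewrite -f_line scale0r addr0.
have line_cvg : x + t *: e @[t --> 0] --> x.
  rewrite -{2}[x]addr0 -(scale0r e); apply: cvgD; first exact: cvg_cst.
  by apply: cvgZ; [exact: cvg_id | exact: cvg_cst].
by near=> t; rewrite -f_line; near: t; exact: line_cvg _ f_min.
Unshelve. all: by end_near.
Qed.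

End PolynomialLine.

Section Frobenius.
Variables (R : realType) (d : nat).
Implicit Types (A B C G M S U W : 'M[R]_d).

Definition gram U := U *m U^T.
Definition dgram U A := A *m U^T + U *m A^T.

Lemma gram_line U A t : gram (U + t *: A) = gram U + t *: dgram U A + t ^+ 2 *: gram A.
Proof.
rewrite /gram /dgram linearD linearZ /= mulmxDl !mulmxDr -!scalemxAl -!scalemxAr.
by rewrite scalerA -expr2 scalerDr !addrA (addrAC (U *m U^T)).
Qed.

Lemma dgram_eq0 U A : A *m U^T = 0 -> dgram U A = 0.
Proof. by move=> AU0; rewrite /dgram -[U *m _]trmxK trmx_mul !trmxK AU0 trmx0 addr0. Qed.

Lemma frobC A B : frob A B = frob B A.
Proof. by rewrite /frob -mxtrace_tr trmx_mul trmxK. Qed.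

Lemma frobDr A B C : frob A (B + C) = frob A B + frob A C.
Proof. by rewrite /frob mulmxDr mxtraceD. Qed.

Lemma frobZr A B c : frob A (c *: B) = c * frob A B.
Proof. by rewrite /frob -scalemxAr mxtraceZ. Qed.

Lemma frobNr A B : frob A (- B) = - frob A B.
Proof. by rewrite -scaleN1r frobZr mulN1r. Qed.

Lemma frobBr A B C : frob A (B - C) = frob A B - frob A C.
Proof. by rewrite frobDr frobNr. Qed.

Lemma frob0r A : frob A 0 = 0.
Proof. by rewrite /frob mulmx0 mxtrace0. Qed.

Lemma frobDl A B C : frob (A + B) C = frob A C + frob B C.
Proof. by rewrite !(frobC _ C) frobDr. Qed.

Lemma frobBl A B C : frob (A - B) C = frob A C - frob B C.
Proof. by rewrite !(frobC _ C) frobBr. Qed.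

Lemma frobZl A B c : frob (c *: A) B = c * frob A B.
Proof. by rewrite !(frobC _ B) frobZr. Qed.

Lemma frob_suml n (F : 'I_n -> 'M[R]_d) B : frob (\sum_k F k) B = \sum_k frob (F k) B.
Proof. by rewrite /frob linear_sum /= mulmx_suml raddf_sum. Qed.

Lemma frob_scalar_mx c M : frob c%:M M = c * \tr M.
Proof. by rewrite /frob tr_scalar_mx mul_scalar_mx mxtraceZ. Qed.

Lemma frob_gram S A : frob S (gram A) = frob A (S *m A).
Proof. by rewrite /frob /gram mulmxA mxtrace_mulC -mxtrace_tr !trmx_mul !trmxK mulmxA. Qed.

Lemma frob_dgram S U A : S^T = S -> frob S (dgram U A) = 2 * frob (S *m U) A.
Proof.
move=> S_sym; rewrite /dgram frobDr mulr_natl mulr2n; congr (_ + _).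
  by rewrite /frob mulmxA mxtrace_mulC mulmxA trmx_mul.
by rewrite /frob trmx_mul S_sym mulmxA mxtrace_mulC -mxtrace_tr !trmx_mul trmxK S_sym.
Qed.

Lemma mxtrace_mulTmx_self m p (X : 'M[R]_(m, p)) :
  \tr (X^T *m X) = \sum_j \sum_i X i j ^+ 2.
Proof.
by apply: eq_bigr => j _; rewrite mxE; apply: eq_bigr => i _; rewrite !mxE expr2.
Qed.

Lemma mxtrace_mulTmx_self_ge0 m p (X : 'M[R]_(m, p)) : 0 <= \tr (X^T *m X).
Proof.
by rewrite mxtrace_mulTmx_self; apply/sumr_ge0 => j _; apply/sumr_ge0 => i _; exact: sqr_ge0.
Qed.

Lemma mxtrace_mulTmx_self_eq0 m p (X : 'M[R]_(m, p)) : \tr (X^T *m X) = 0 -> X = 0.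
Proof.
rewrite mxtrace_mulTmx_self => /eqP; rewrite psumr_eq0 => [/allP X0|j _]; last first.
  by apply/sumr_ge0 => i _; exact: sqr_ge0.
apply/matrixP => i j; move/implyP/(_ isT): (X0 j (mem_index_enum j)).
rewrite psumr_eq0 => [/allP/(_ i (mem_index_enum i))/implyP/(_ isT)|k _]; last first.
  exact: sqr_ge0.
by rewrite sqrf_eq0 mxE => /eqP.
Qed.

Definition psdmx M := forall w : 'cV[R]_d, 0 <= (w^T *m (M *m w)) 0 0.

Lemma psdmx_frob M W : psdmx M -> 0 <= frob W (M *m W).
Proof.
move=> M_psd; rewrite /frob /mxtrace sumr_ge0 // => j _.
have -> : (W^T *m (M *m W)) j j = ((col j W)^T *m (M *m col j W)) 0 0.
  rewrite !mxE; apply: eq_bigr => k _; rewrite !mxE; congr (_ * _).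
  by apply: eq_bigr => l _; rewrite !mxE.
exact: M_psd.
Qed.

(* If U is singular, take a row v != 0 with v U^T = 0: every A = w v is then
   admissible and frob A (M A) = (w^T M w) |v|^2. *)
Lemma psdmx_of_kernel M U : M *m U = 0 ->
  (forall A, A *m U^T = 0 -> 0 <= frob A (M *m A)) -> psdmx M.
Proof.
move=> MU0 M_ker w; have [U_unit | U_sing] := boolP (U \in unitmx).
  by rewrite -(mulmxK U_unit M) MU0 !mul0mx mulmx0 mxE.
have /det0P [v v_neq0 vU0] : \det U^T == 0.
  by move: U_sing; rewrite det_tr unitmxE unitfE negbK.
have v_pos : 0 < \tr (v^T *m v).
  rewrite lt_def mxtrace_mulTmx_self_ge0 andbT.
  by apply: contra v_neq0 => /eqP/mxtrace_mulTmx_self_eq0 ->.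
have rank_one : frob (w *m v) (M *m (w *m v)) = (w^T *m (M *m w)) 0 0 * \tr (v^T *m v).
  rewrite /frob trmx_mul.
  have -> : v^T *m w^T *m (M *m (w *m v)) = v^T *m (w^T *m (M *m w)) *m v by rewrite !mulmxA.
  by rewrite {1}[w^T *m _]mx11_scalar mul_mx_scalar -scalemxAl mxtraceZ.
rewrite -(pmulr_lge0 _ v_pos) -rank_one; apply: M_ker.
by rewrite -mulmxA vU0 mulmx0.
Qed.

End Frobenius.

Section Loss.
Variables (R : realType) (d n : nat) (P : 'I_n -> 'M[R]_d) (y : 'I_n -> R) (lambda : R).
Implicit Types (X D G : 'M[R]_d) (UV e : 'M[R]_d * 'M[R]_d).

Definition fit X := n%:R^-1 * \sum_(k < n) (frob (P k) X - y k) ^+ 2.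

Definition fit_grad X := n%:R^-1 *: \sum_(k < n) (2 * (frob (P k) X - y k)) *: P k.

Definition loss UV :=
  fit (gram UV.1 - gram UV.2) + lambda / 2 * \tr (gram UV.1 + gram UV.2).

Definition loss_grad UV := fit_grad (gram UV.1 - gram UV.2).

Definition Splus G := (lambda / 2)%:M + G.
Definition Sminus G := (lambda / 2)%:M - G.

Definition slope UV e :=
  2 * (frob (Splus (loss_grad UV) *m UV.1) e.1 + frob (Sminus (loss_grad UV) *m UV.2) e.2).

Definition curvature UV e :=
  n%:R^-1 * \sum_(k < n) frob (P k) (dgram UV.1 e.1 - dgram UV.2 e.2) ^+ 2
  + frob e.1 (Splus (loss_grad UV) *m e.1) + frob e.2 (Sminus (loss_grad UV) *m e.2).

Lemma frob_fit_grad X D :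
  frob (fit_grad X) D = n%:R^-1 * \sum_(k < n) 2 * (frob (P k) X - y k) * frob (P k) D.
Proof.
by rewrite /fit_grad frobZl frob_suml; congr (_ * _); apply: eq_bigr => k _; rewrite frobZl.
Qed.

Lemma fit_ge_tangent X X' : fit X + frob (fit_grad X) (X' - X) <= fit X'.
Proof.
rewrite frob_fit_grad /fit -mulrDr -big_split /= ler_wpM2l ?invr_ge0 ?ler0n //.
apply: ler_sum => k _; rewrite frobBr -subr_ge0.
set a := frob (P k) X'; set b := frob (P k) X.
have -> : (a - y k) ^+ 2 - ((b - y k) ^+ 2 + 2 * (b - y k) * (a - b)) = (a - b) ^+ 2 by ring.
exact: sqr_ge0.
Qed.

Lemma fit_curve X D1 D2 t :
  fit (X + t *: D1 + t ^+ 2 *: D2) =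
  fit X + t * frob (fit_grad X) D1
  + t ^+ 2 * (n%:R^-1 * \sum_(k < n) frob (P k) D1 ^+ 2 + frob (fit_grad X) D2)
  + t ^+ 3 * (n%:R^-1 * \sum_(k < n) 2 * frob (P k) D1 * frob (P k) D2)
  + t ^+ 4 * (n%:R^-1 * \sum_(k < n) frob (P k) D2 ^+ 2).
Proof.
rewrite !frob_fit_grad /fit.
have -> : \sum_(k < n) (frob (P k) (X + t *: D1 + t ^+ 2 *: D2) - y k) ^+ 2 =
    \sum_(k < n) (frob (P k) X - y k) ^+ 2
    + t * \sum_(k < n) 2 * (frob (P k) X - y k) * frob (P k) D1
    + t ^+ 2 * \sum_(k < n) (frob (P k) D1 ^+ 2 + 2 * (frob (P k) X - y k) * frob (P k) D2)
    + t ^+ 3 * \sum_(k < n) 2 * frob (P k) D1 * frob (P k) D2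
    + t ^+ 4 * \sum_(k < n) frob (P k) D2 ^+ 2.
  rewrite !mulr_sumr -!big_split /=; apply: eq_bigr => k _.
  by rewrite !(frobDr, frobZr); ring.
by rewrite big_split /=; ring.
Qed.

Lemma frob_Splus_Sminus G XU XV :
  frob (Splus G) XU + frob (Sminus G) XV = frob G (XU - XV) + lambda / 2 * \tr (XU + XV).
Proof. by rewrite /Splus /Sminus frobDl frobBl !frob_scalar_mx frobBr mxtraceD; ring. Qed.

Lemma loss_Splus_Sminus G UV :
  loss UV = fit (gram UV.1 - gram UV.2) - frob G (gram UV.1 - gram UV.2)
            + frob UV.1 (Splus G *m UV.1) + frob UV.2 (Sminus G *m UV.2).
Proof. by rewrite -!frob_gram -addrA frob_Splus_Sminus /loss; ring. Qed.

Lemma global_min_of_psd UV :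
  Splus (loss_grad UV) *m UV.1 = 0 -> Sminus (loss_grad UV) *m UV.2 = 0 ->
  psdmx (Splus (loss_grad UV)) -> psdmx (Sminus (loss_grad UV)) -> global_min loss UV.
Proof.
move=> SpU0 SmV0 Sp_psd Sm_psd UV'.
rewrite (loss_Splus_Sminus (loss_grad UV) UV) (loss_Splus_Sminus (loss_grad UV) UV').
rewrite SpU0 SmV0 !frob0r !addr0.
have := fit_ge_tangent (gram UV.1 - gram UV.2) (gram UV'.1 - gram UV'.2).
have := psdmx_frob UV'.1 Sp_psd; have := psdmx_frob UV'.2 Sm_psd.
rewrite frobBr /loss_grad; lra.
Qed.

Hypothesis P_sym : forall k, (P k)^T = P k.

Lemma fit_grad_sym X : (fit_grad X)^T = fit_grad X.
Proof.
rewrite /fit_grad linearZ /= linear_sum; congr (_ *: _).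
by apply: eq_bigr => k _; rewrite linearZ /= P_sym.
Qed.

Lemma loss_line UV e : exists p : {poly R},
  [/\ forall t, loss (UV + t *: e) = p.[t], p`_1 = slope UV e & p`_2 = curvature UV e].
Proof.
case: UV e => [U V] [A B]; pose G := fit_grad (gram U - gram V).
set D1 := dgram U A - dgram V B; set D2 := gram A - gram B.
set c3 := n%:R^-1 * \sum_(k < n) 2 * frob (P k) D1 * frob (P k) D2.
set c4 := n%:R^-1 * \sum_(k < n) frob (P k) D2 ^+ 2.
exists ((loss (U, V))%:P + slope (U, V) (A, B) *: 'X + curvature (U, V) (A, B) *: 'X^2
        + c3 *: 'X^3 + c4 *: 'X^4).
split=> [t||]; last 2 first.
- by rewrite !coefE /=; ring.
- by rewrite !coefE /=; ring.
have G_sym : G^T = G by exact: fit_grad_sym.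
have slopeE : slope (U, V) (A, B) = frob G D1 + lambda / 2 * \tr (dgram U A + dgram V B).
  rewrite -frob_Splus_Sminus !frob_dgram /slope ?mulrDr //.
    by rewrite /Sminus linearB /= tr_scalar_mx G_sym.
  by rewrite /Splus linearD /= tr_scalar_mx G_sym.
have curvE : curvature (U, V) (A, B) =
    n%:R^-1 * \sum_(k < n) frob (P k) D1 ^+ 2 + frob G D2
    + lambda / 2 * \tr (gram A + gram B).
  by rewrite -addrA -frob_Splus_Sminus !frob_gram /curvature addrA.
have XE : gram (U + t *: A) - gram (V + t *: B) = gram U - gram V + t *: D1 + t ^+ 2 *: D2.
  by rewrite !gram_line /D1 /D2 !scalerBr !opprD addrACA (addrACA (gram U)).
rewrite !hornerE /loss /= XE fit_curve !gram_line !mxtraceD !mxtraceZ.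
by rewrite slopeE curvE !mxtraceD -/G /c3 /c4; ring.
Qed.

Lemma global_min_of_second_order UV :
  (forall e, slope UV e = 0) -> (forall e, 0 <= curvature UV e) -> global_min loss UV.
Proof.
case: UV => U V slope0 curv_ge0; pose G := loss_grad (U, V).
have curv_ker A B : A *m U^T = 0 -> B *m V^T = 0 ->
    curvature (U, V) (A, B) = frob A (Splus G *m A) + frob B (Sminus G *m B).
  move=> AU0 BV0; rewrite /curvature /= (dgram_eq0 AU0) (dgram_eq0 BV0) subrr.
  by rewrite big1 ?mulr0 ?add0r // => k _; rewrite frob0r expr0n.
have SpU0 : Splus G *m U = 0.
  apply: mxtrace_mulTmx_self_eq0; have /eqP := slope0 (Splus G *m U, 0).
  by rewrite /slope frob0r addr0 mulf_eq0 pnatr_eq0 => /eqP.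
have SmV0 : Sminus G *m V = 0.
  apply: mxtrace_mulTmx_self_eq0; have /eqP := slope0 (0, Sminus G *m V).
  by rewrite /slope frob0r add0r mulf_eq0 pnatr_eq0 => /eqP.
apply: global_min_of_psd => //.
- apply: (psdmx_of_kernel SpU0) => A AU0.
  by have := curv_ge0 (A, 0); rewrite curv_ker ?mul0mx // mulmx0 frob0r addr0.
- apply: (psdmx_of_kernel SmV0) => B BV0.
  by have := curv_ge0 (0, B); rewrite curv_ker ?mul0mx // mulmx0 frob0r add0r.
Qed.

Lemma global_min_of_line_polys UV :
  (forall e (p : {poly R}), (forall t, loss (UV + t *: e) = p.[t]) -> p`_1 = 0 /\ 0 <= p`_2) ->
  global_min loss UV.
Proof.
move=> line_min; apply: global_min_of_second_order => e.
  by have [p [/line_min [p1_0 _] <- _]] := loss_line UV e.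
by have [p [/line_min [_ p2_ge0] _ <-]] := loss_line UV e.
Qed.

End Loss.

Theorem theoremF1 (R : realType) (d n : nat) (lambda : R) (hlambda : 0 < lambda)
  (idx : 'I_n -> 'I_d * 'I_d) (y : 'I_n -> R) :
  (forall UV : 'M[R]_d * 'M[R]_d,
     local_min (lossL idx y lambda) UV -> global_min (lossL idx y lambda) UV) /\
  (forall UV : 'M[R]_d * 'M[R]_d,
     saddle (lossL idx y lambda) UV ->
     exists E : 'M[R]_d * 'M[R]_d, hess_form (lossL idx y lambda) UV E < 0).
Proof.
pose P k : 'M[R]_d := Pmat (idx k).
have P_sym k : (P k)^T = P k by rewrite /P /Pmat linearZ /= linearD /= !trmx_delta addrC.
have -> : lossL idx y lambda = loss P y lambda by [].
split=> UV.
- move=> UV_min; apply: global_min_of_line_polys => // e p p_line.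
  exact: local_min_line_poly p_line UV_min.
- move=> [UV_stat [UV_not_min _]]; apply/not_existsP => no_neg_dir; apply: UV_not_min.
  suff UV_gmin : global_min (loss P y lambda) UV by apply: filterE => UV'; exact: UV_gmin.
  apply: global_min_of_line_polys => // e p p_line.
  split; first exact: stationary_line_poly p_line UV_stat.
  rewrite -(pmulr_rge0 _ (ltr0n R 2)) -(hess_form_line_poly p_line) leNgt.
  by apply/negP => neg; exact: no_neg_dir neg.
Qed.
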